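(* Let $k,r,h$ be positive integers such that $\ell=\frac{k+h}{r}$ is an integer. Let $m$ be the smallest integer such that $r\mid m$ and $\ell\le 2^m$. Then there exists a maximally recoverable local $(k,r,h)$-code over the field $\mathbb{F}_{2^t}$, where $t=r+m\left\lceil (h-1)\left(1-\frac{1}{2^r}\right)\right\rceil$.
   Context: For positive integers $k,r,h$ with $r\mid(k+h)$, a local $(k,r,h)$-code over a finite field $\mathbb{F}$ is a linear systematic code of dimension $k$ and length $k+h+\frac{k+h}{r}$ consisting of $k$ data symbols, $h$ heavy parity symbols (each a fixed $\mathbb{F}$-linear combination of all data symbols), and, after partitioning the $k+h$ data and heavy parity symbols into $\frac{k+h}{r}$ groups of size $r$, one local parity per group equal to the sum (XOR) of the group's symbols. A local group is such a group together with its local parity. The code is maximally recoverable if for every set $E$ of coordinates containing exactly one coordinate from each local group, puncturing the code in $E$ (deleting those coordinates) yields a maximum distance separable $[k+h,k]$ code (minimum distance $h+1$). *)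

From HB Require Import structures.
From mathcomp Require Import all_boot all_order all_algebra.
Set Implicit Arguments. Unset Strict Implicit. Unset Printing Implicit Defensive.
Import GRing.Theory.
Local Open Scope ring_scope.

(* ceil (a / b) on naturals, for b > 0 *)
Definition ceil_div (a b : nat) : nat := ((a + b).-1 %/ b)%N.

Section LocalCodes.
Variables (F : fieldType) (k h l : nat).

(* Coordinates of a local (k,r,h)-code: the k+h data/heavy-parity symbols
   (inl i; the first k are the data symbols, the last h the heavy parities)
   and the l local parities (inr j). *)
Definition coord := ('I_(k + h) + 'I_l)%type.

Definition data_heavy (A : 'M[F]_(k, h)) (x : 'rV[F]_k) : 'rV[F]_(k + h) :=
  row_mx x (x *m A).

(* the encoding map (codeword of message x); g assigns each of the k+h
   symbols to its group, the local parity of group j is the sum of its symbols *)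
Definition enc (A : 'M[F]_(k, h)) (g : 'I_(k + h) -> 'I_l) (x : 'rV[F]_k)
  (c : coord) : F :=
  match c with
  | inl i => data_heavy A x 0 i
  | inr j => \sum_(i | g i == j) data_heavy A x 0 i
  end.

Definition groups_of_size (r : nat) (g : 'I_(k + h) -> 'I_l) : Prop :=
  forall j : 'I_l, #|[set i | g i == j]| = r.

Definition local_group (g : 'I_(k + h) -> 'I_l) (j : 'I_l) : {set coord} :=
  [set c | match c with inl i => g i == j | inr j' => j' == j end].

Definition punct_weight A g (E : {set coord}) (x : 'rV[F]_k) : nat :=
  #|[set c | (c \notin E) && (enc A g x c != 0)]|.

(* The code punctured in E is an MDS [k+h, k] code: it has length k+h,
   dimension k (the punctured encoder is injective) and minimum distance
   (at least, hence by the Singleton bound exactly) h+1. *)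
Definition punctured_MDS A g (E : {set coord}) : Prop :=
  [/\ #|~: E| = (k + h)%N,
      (forall x y, (forall c, c \notin E -> enc A g x c = enc A g y c) -> x = y) &
      (forall x, x != 0 -> (h + 1 <= punct_weight A g E x)%N)].

Definition max_recoverable A g : Prop :=
  forall E : {set coord},
    (forall j : 'I_l, #|E :&: local_group g j| = 1%N) -> punctured_MDS A g E.

End LocalCodes.

(* Choose an element [b i] of F for each data or heavy symbol and heavy parities
   making every codeword orthogonal to the Moore columns [(b i ^+ 2 ^ j)_i], j < h.
   If [e] erases one symbol per local group, subtracting [b (e g)] inside each group
   (local groups sum to zero) turns a codeword of weight at most h outside [e] into
   a solution of a Moore system in the shifted values [b c - b (e (group c))]; if
   these are F_2-independent the solution is zero, since the Moore matrix of an
   F_2-independent family is invertible (a nonzero linearized polynomial of degree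
   below 2 ^ s cannot vanish on the 2 ^ s subset sums of s independent elements).
   So maximal recoverability reduces to the condition [mr_design] on [b].
   Over F = F_2 ^ t it is met by the vector made of the position of [i] inside its
   group, followed by the F_2-coordinates, in a field K of size 2 ^ m with distinct
   group labels [al g], of [ell (pos i) * al g ^+ n] for the exponents 0 < n < h
   not divisible by 2 ^ r; here [ell] embeds F_2 ^ r into the subfield of size
   2 ^ r. A vanishing combination would yield a family of Frobenius-fixed elements,
   one per group, with all power sums of exponent < h against [al] zero (those of
   exponent divisible by 2 ^ r follow by Frobenius), hence zero by Vandermonde. *)

From HB Require Import structures.
From mathcomp Require Import all_boot all_order all_algebra all_field.
From mathcomp Require Import cyclic zify.
Set Implicit Arguments. Unset Strict Implicit. Unset Printing Implicit Defensive.
Import GRing.Theory.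
Local Open Scope ring_scope.

Section Char2Frobenius.
Variable R : comNzRingType.
Hypothesis charR2 : (2 \in [pchar R])%N.

Lemma expr2nD n (x y : R) : (x + y) ^+ (2 ^ n) = x ^+ (2 ^ n) + y ^+ (2 ^ n).
Proof. by apply: exprDn_pchar; rewrite pnatX; apply/orP; left; rewrite pnatE // inE. Qed.

Lemma expr2nB n (x y : R) : (x - y) ^+ (2 ^ n) = x ^+ (2 ^ n) - y ^+ (2 ^ n).
Proof. by rewrite !(GRing.subr_pchar2 charR2) expr2nD. Qed.

Lemma expr2n_sum n (I : Type) (s : seq I) (P : pred I) (f : I -> R) :
  (\sum_(i <- s | P i) f i) ^+ (2 ^ n) = \sum_(i <- s | P i) f i ^+ (2 ^ n).
Proof.
by apply: (big_morph (fun x => x ^+ (2 ^ n))) => [x y|]; rewrite ?expr2nD ?expr0n ?expn_eq0.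
Qed.

End Char2Frobenius.

Section AdditiveMaps.
Variables (U V : zmodType) (f : U -> V).
Hypothesis fD : {morph f : a b / a + b}.

Lemma morph_add0 : f 0 = 0.
Proof. by apply: (addrI (f 0)); rewrite -fD !addr0. Qed.

Lemma morph_addN a : f (- a) = - f a.
Proof. by apply: (addrI (f a)); rewrite -fD !subrr morph_add0. Qed.

Lemma morph_add_sum (I : Type) (s : seq I) (P : pred I) (F : I -> U) :
  f (\sum_(i <- s | P i) F i) = \sum_(i <- s | P i) f (F i).
Proof. exact: (big_morph f fD morph_add0). Qed.

Lemma morph_add_inj_eq0 : injective f -> forall a, f a = 0 -> a = 0.
Proof. by move=> f_inj a; rewrite -morph_add0 => /f_inj. Qed.

End AdditiveMaps.

Section MooreMatrix.
Variable F : fieldType.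
Hypothesis charF2 : (2 \in [pchar F])%N.

Definition F2free (I : finType) (g : I -> F) :=
  forall J : {set I}, J != set0 -> \sum_(i in J) g i != 0.

Lemma F2free_subset_sum_inj (I : finType) (g : I -> F) :
  F2free g -> injective (fun J : {set I} => \sum_(i in J) g i).
Proof.
move=> free_g J1 J2 /= eqJ; apply/eqP; apply: contraT => neqJ.
have symD : \sum_(i in (J1 :\: J2) :|: (J2 :\: J1)) g i =
            \sum_(i in J1) g i - \sum_(i in J2) g i.
  rewrite !(big_mkcond (fun i => i \in _)) -sumrB; apply: eq_bigr => i _.
  rewrite !inE; case: (i \in J1); case: (i \in J2);
    by rewrite ?subrr ?subr0 ?sub0r ?(GRing.oppr_pchar2 charF2).
have := free_g ((J1 :\: J2) :|: (J2 :\: J1)); rewrite symD eqJ subrr eqxx.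
apply; apply: contra neqJ => /eqP symD0; apply/eqP/setP => i.
have := congr1 (fun A : {set I} => i \in A) symD0; rewrite !inE.
by case: (i \in J1); case: (i \in J2).
Qed.

(* A linearized polynomial; in characteristic 2 its evaluation is additive. *)
Definition lin_poly s (a : 'I_s -> F) : {poly F} := \sum_(j < s) a j *: 'X^(2 ^ j).

Lemma lin_poly_sum s (a : 'I_s -> F) (I : finType) (J : {set I}) (x : I -> F) :
  (lin_poly a).[\sum_(i in J) x i] = \sum_(i in J) (lin_poly a).[x i].
Proof.
under [RHS]eq_bigr do rewrite horner_sum.
rewrite horner_sum exchange_big /=; apply: eq_bigr => j _.
rewrite hornerZ hornerXn (expr2n_sum charF2) mulr_sumr; apply: eq_bigr => i _.
by rewrite hornerZ hornerXn.
Qed.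

Lemma size_lin_poly s (a : 'I_s.+1 -> F) : (size (lin_poly a) <= (2 ^ s).+1)%N.
Proof.
apply/leq_sizeP => n lt_n; rewrite coef_sum big1 // => j _.
rewrite coefZ coefXn; case: eqP => [n2j|]; last by rewrite mulr0.
by move: lt_n; rewrite n2j ltn_exp2l // ltnNge -ltnS ltn_ord.
Qed.

Lemma lin_poly_neq0 s (a : 'I_s -> F) j : a j != 0 -> lin_poly a != 0.
Proof.
move=> aj0; apply: contra aj0 => /eqP /(congr1 (fun p : {poly F} => p`_(2 ^ j))).
rewrite coef0 coef_sum (bigD1 j) //= coefZ coefXn eqxx mulr1 big1 ?addr0 => [->//|i ij].
by rewrite coefZ coefXn eqn_exp2l // -[_ == _]/(j == i) eq_sym (negbTE ij) mulr0.
Qed.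

(* A nonzero linearized polynomial of degree at most [2 ^ (s-1)] cannot vanish on
   the [2 ^ s] distinct subset sums of an [F2free] family of size [s]. *)
Lemma lin_poly_free_roots s (a : 'I_s -> F) (g : 'I_s -> F) :
  F2free g -> (forall i, root (lin_poly a) (g i)) -> forall j, a j = 0.
Proof.
move=> free_g root_g j; apply: contraTeq isT => aj0.
move: a g free_g root_g aj0; case: s j => [[]//|s] j a g free_g root_g aj0.
pose sums := [seq \sum_(i in J) g i | J : {set 'I_s.+1} <- enum (powerset [set: 'I_s.+1])].
have uniq_sums : uniq sums by rewrite map_inj_uniq ?enum_uniq //; exact: F2free_subset_sum_inj.
have root_sums : all (root (lin_poly a)) sums.
  apply/allP => _ /mapP [J _ ->]; rewrite /root lin_poly_sum.
  by rewrite big1 // => i _; apply/eqP; exact: root_g.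
have := max_poly_roots (lin_poly_neq0 aj0) root_sums uniq_sums.
rewrite size_map -cardE card_powerset cardsT card_ord => /leq_trans/(_ (size_lin_poly a)).
by rewrite expnS; have := expn_gt0 2 s; lia.
Qed.

Definition moore_mx s (g : 'I_s -> F) : 'M[F]_s := \matrix_(i, j) g i ^+ (2 ^ j).

Lemma moore_mx_unit s (g : 'I_s -> F) : F2free g -> moore_mx g \in unitmx.
Proof.
move=> free_g; rewrite -unitmx_tr unitmxE unitfE; apply: contraT.
rewrite negbK => /det0P [a a0 aM]; case/eqP: a0; apply/rowP => j; rewrite mxE.
apply: (lin_poly_free_roots (a := a 0)) free_g _ j => i.
apply/eqP; move/rowP: aM => /(_ i); rewrite !mxE => <-.
by rewrite /lin_poly horner_sum; apply: eq_bigr => j' _; rewrite hornerZ hornerXn !mxE.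
Qed.

Lemma moore_vanishing (I : finType) (T : {set I}) (g c : I -> F) h :
  (#|T| <= h)%N -> (forall J : {set I}, J \subset T -> J != set0 -> \sum_(i in J) g i != 0) ->
  (forall j, (j < h)%N -> \sum_(i in T) c i * g i ^+ (2 ^ j) = 0) ->
  {in T, forall i, c i = 0}.
Proof.
move=> Th free_T eq_c i iT.
have free_g : F2free (fun t : 'I_#|T| => g (enum_val t)).
  move=> J J0; have := free_T (enum_val @: J).
  rewrite big_imset /=; last by move=> t1 t2 _ _; apply: enum_val_inj.
  apply; last by rewrite imset_eq0.
  by apply/subsetP => _ /imsetP [t _ ->]; exact: enum_valP.
pose cT := \row_(t < #|T|) c (enum_val t).
have : cT *m moore_mx (fun t => g (enum_val t)) = 0.
  apply/rowP => j; rewrite !mxE -[RHS](eq_c j) ?(leq_trans (ltn_ord j)) //.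
  by rewrite [RHS]big_enum_val /=; apply: eq_bigr => t _; rewrite !mxE.
move/(congr1 (mulmx^~ (invmx (moore_mx (fun t => g (enum_val t)))))).
rewrite mulmxK ?moore_mx_unit // mul0mx => /rowP /(_ (enum_rank_in iT i)).
by rewrite !mxE enum_rankK_in.
Qed.

End MooreMatrix.

Section Design.
Variables (k h l : nat) (g : 'I_(k + h) -> 'I_l).

Definition group_of (c : coord k h l) : 'I_l :=
  match c with inl i => g i | inr j => j end.

Lemma in_local_group c j : (c \in local_group g j) = (group_of c == j).
Proof. by rewrite inE; case: c. Qed.

Lemma sum_by_group (V : zmodType) (I : {set coord k h l}) (G : coord k h l -> 'I_l -> V) :
  \sum_(c in I) G c (group_of c) = \sum_j \sum_(c in I | group_of c == j) G c j.
Proof.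
rewrite (partition_big group_of predT) //=; apply: eq_bigr => j _.
by apply: eq_bigr => c /andP [_ /eqP ->].
Qed.

Definition mr_design (V : zmodType) (b : coord k h l -> V) :=
  forall (I : {set coord k h l}) (e : 'I_l -> coord k h l),
    I != set0 -> (#|I| <= h)%N -> (forall j, e j \in local_group g j) ->
    (forall j, e j \notin I) -> \sum_(c in I) (b c - b (e (group_of c))) != 0.

Lemma mr_design_morph (V W : zmodType) (f : V -> W) (b : coord k h l -> V) :
  {morph f : x y / x + y} -> injective f -> mr_design b -> mr_design (f \o b).
Proof.
move=> fD f_inj design_b I e I0 Ih e_grp e_I.
apply: contra (design_b I e I0 Ih e_grp e_I) => /eqP sum0; apply/eqP.
apply: (morph_add_inj_eq0 fD f_inj); rewrite (morph_add_sum fD) -[RHS]sum0.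
by apply: eq_bigr => c _; rewrite fD morph_addN.
Qed.

End Design.

Section Encoding.
Variables (F : fieldType) (k h l : nat) (g : 'I_(k + h) -> 'I_l) (A : 'M[F]_(k, h)).
Hypothesis charF2 : (2 \in [pchar F])%N.

Lemma encB x y c : enc A g (x - y) c = enc A g x c - enc A g y c.
Proof.
have dhB : data_heavy A (x - y) = data_heavy A x - data_heavy A y.
  by rewrite /data_heavy mulmxBl opp_row_mx add_row_mx.
case: c => [i|j] /=; first by rewrite dhB !mxE.
by rewrite -sumrB; apply: eq_bigr => i _; rewrite dhB !mxE.
Qed.

Lemma enc_local_sum x j : \sum_(c | group_of g c == j) enc A g x c = 0.
Proof.
rewrite (big_sumType _ (fun c => group_of g c == j)) /= big_pred1_eq.
exact: (GRing.addrr_pchar2 charF2).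
Qed.

Lemma enc_group_orth x (a : 'I_l -> F) :
  \sum_(c : coord k h l) enc A g x c * a (group_of g c) = 0.
Proof.
rewrite (partition_big (group_of g) predT) //= big1 // => j _.
rewrite (eq_bigr (fun c => enc A g x c * a j)); last by move=> c /eqP ->.
by rewrite -mulr_suml enc_local_sum mul0r.
Qed.

End Encoding.

Section MooreCode.
Variables (F : fieldType) (k h l : nat) (g : 'I_(k + h) -> 'I_l).
Variable b : coord k h l -> F.
Hypotheses (charF2 : (2 \in [pchar F])%N) (b_inr : forall j, b (inr j) = 0).
Hypothesis design_b : mr_design g b.

Definition moore_check : 'M[F]_(k + h, h) := \matrix_(i, j) b (inl i) ^+ (2 ^ j).

(* Solving [row_mx x (x *m A) *m moore_check = 0] for the heavy parities. *)
Definition moore_heavy : 'M[F]_(k, h) :=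
  - (usubmx moore_check *m invmx (dsubmx moore_check)).

Lemma moore_check_heavy_unit : dsubmx moore_check \in unitmx.
Proof.
have -> : dsubmx moore_check = moore_mx (fun i => b (inl (rshift k i))).
  by apply/matrixP => i j; rewrite !mxE.
apply: moore_mx_unit => // J J0.
have heavy_inj : injective (fun i : 'I_h => inl (rshift k i) : coord k h l).
  by move=> i1 i2 [] /addnI /val_inj.
have := design_b (I := [set inl (rshift k i) | i in J]) (e := inr).
rewrite big_imset /=; last by move=> i1 i2 _ _ /heavy_inj.
under eq_bigr do rewrite b_inr subr0.
apply; first by rewrite imset_eq0.
- by rewrite card_imset // (leq_trans (max_card _)) ?card_ord.
- by move=> j; rewrite in_local_group.
- by move=> j; apply/imsetP => -[].
Qed.

Lemma data_heavy_moore_orth x : data_heavy moore_heavy x *m moore_check = 0.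
Proof.
rewrite /data_heavy -[moore_check]vsubmxK mul_row_col mulmxN mulmxA.
by rewrite mulNmx mulmxKV ?moore_check_heavy_unit // addrN.
Qed.

Lemma enc_moore_orth x j : (j < h)%N ->
  \sum_c enc moore_heavy g x c * b c ^+ (2 ^ j) = 0.
Proof.
move=> lt_jh; rewrite big_sumType /= [X in _ + X]big1 ?addr0; last first.
  by move=> i _; rewrite b_inr expr0n expn_eq0 mulr0.
move/rowP: (data_heavy_moore_orth x) => /(_ (Ordinal lt_jh)); rewrite !mxE => orth.
by rewrite -[RHS]orth; apply: eq_bigr => i _; rewrite /moore_check mxE.
Qed.

Section Puncture.
Variable E : {set coord k h l}.
Hypothesis E_one : forall j, #|E :&: local_group g j| = 1%N.

Definition erased j : coord k h l := odflt (inr j) [pick c in E :&: local_group g j].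

Lemma erased_in j : erased j \in E :&: local_group g j.
Proof.
rewrite /erased; case: pickP => [c -> // | none].
by have := E_one j; rewrite (eq_card0 none).
Qed.

Lemma erased_group_of c : c \in E -> erased (group_of g c) = c.
Proof.
move=> cE; have /eqP/cards1P [c0 E_c0] := E_one (group_of g c).
have := erased_in (group_of g c); rewrite E_c0 inE => /eqP ->; apply/esym/set1P.
by rewrite -E_c0 in_setI cE in_local_group eqxx.
Qed.

Lemma card_erasure : #|E| = l.
Proof.
rewrite -sum1_card (partition_big (group_of g) predT) //=.
rewrite (eq_bigr (fun _ => 1%N)) ?sum1_card ?card_ord // => j _.
by rewrite -[RHS](E_one j) -sum1_card; apply: eq_bigl => c; rewrite inE in_local_group.
Qed.

Lemma enc_shift_orth x j : (j < h)%N ->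
  \sum_c enc moore_heavy g x c * (b c - b (erased (group_of g c))) ^+ (2 ^ j) = 0.
Proof.
move=> lt_jh; under eq_bigr do rewrite (expr2nB charF2) mulrBr.
rewrite sumrB enc_moore_orth //.
by rewrite (enc_group_orth _ _ charF2 x (fun j' => b (erased j') ^+ (2 ^ j))) subrr.
Qed.

Lemma enc_vanish_outside x : (punct_weight moore_heavy g E x <= h)%N ->
  forall c, c \notin E -> enc moore_heavy g x c = 0.
Proof.
move=> weight_h; pose T := [set c | (c \notin E) && (enc moore_heavy g x c != 0)].
pose shift c := b c - b (erased (group_of g c)).
have vanish_T : {in T, forall c, enc moore_heavy g x c = 0}.
  apply: (@moore_vanishing _ charF2 _ T shift _ h weight_h) => [J JT J0 | j lt_jh].
    apply: design_b J0 (leq_trans (subset_leq_card JT) weight_h) _ _ => j.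
      by have /setIP [] := erased_in j.
    apply: contraL (erased_in j) => /(subsetP JT).
    by rewrite !inE => /andP [/negbTE ->].
  rewrite -[RHS](enc_shift_orth x lt_jh) [RHS](bigID (mem T)) /=.
  rewrite [X in _ = _ + X]big1 ?addr0 // => c; rewrite inE negb_and !negbK.
  case/orP => [/erased_group_of cE | /eqP ->]; last by rewrite mul0r.
  by rewrite /shift cE subrr expr0n expn_eq0 mulr0.
move=> c cE; apply/eqP; apply: contraT => enc_c.
have cT : c \in T by rewrite inE cE enc_c.
by rewrite vanish_T // eqxx in enc_c.
Qed.

Lemma enc_vanish_inside x : (forall c, c \notin E -> enc moore_heavy g x c = 0) ->
  forall c, c \in E -> enc moore_heavy g x c = 0.
Proof.
move=> outside0 c cE; have := enc_local_sum g moore_heavy charF2 x (group_of g c).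
rewrite (bigD1 c) //= big1 ?addr0 // => c' /andP [/eqP c'c neq_c'c].
apply: outside0; apply: contra neq_c'c => c'E.
by rewrite -(erased_group_of c'E) -(erased_group_of cE) c'c.
Qed.

Lemma moore_light_codeword x : (punct_weight moore_heavy g E x <= h)%N -> x = 0.
Proof.
move=> weight_h.
have enc0 c : enc moore_heavy g x c = 0.
  have outside0 := enc_vanish_outside weight_h.
  by case: (boolP (c \in E)) => [/(enc_vanish_inside outside0) | /outside0].
have : data_heavy moore_heavy x = 0 by apply/rowP => i; rewrite [RHS]mxE; exact: (enc0 (inl i)).
by move/(congr1 lsubmx); rewrite /data_heavy row_mxKl linear0.
Qed.

Lemma moore_punctured_MDS : punctured_MDS moore_heavy g E.
Proof.
split.
- by apply/eqP; rewrite -(eqn_add2l #|E|) cardsC card_erasure card_sum !card_ord addnC.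
- move=> x y eq_xy; apply/eqP; rewrite -subr_eq0; apply/eqP/moore_light_codeword.
  apply: leq_trans (leq0n h); rewrite leqn0 cards_eq0; apply/eqP/setP => c.
  by rewrite !inE encB; case: (boolP (c \in E)) => //= cE; rewrite eq_xy // subrr eqxx.
- move=> x x0; rewrite addn1 ltnNge; apply: contra x0 => /moore_light_codeword ->.
  exact: eqxx.
Qed.

End Puncture.

Lemma moore_max_recoverable : max_recoverable moore_heavy g.
Proof. by move=> E E_one; apply: moore_punctured_MDS. Qed.

End MooreCode.

Section Blocks.
Variables (n r : nat).
Hypotheses (r_gt0 : (0 < r)%N) (r_dvd_n : (r %| n)%N).

Lemma block_lt (i : 'I_n) : (i %/ r < n %/ r)%N.
Proof. by rewrite ltn_divLR // divnK. Qed.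

Definition block (i : 'I_n) : 'I_(n %/ r) := Ordinal (block_lt i).
Definition offset (i : 'I_n) : 'I_r := Ordinal (ltn_pmod i r_gt0).

Lemma block_offset_inj i i' : block i = block i' -> offset i = offset i' -> i = i'.
Proof.
by move=> [] eq_div [] eq_mod; apply/val_inj; rewrite /= (divn_eq i r) (divn_eq i' r) eq_div eq_mod.
Qed.

Lemma card_block j : #|[set i | block i == j]| = r.
Proof.
have lt_jr (p : 'I_r) : (j * r + p < n)%N.
  have := ltn_ord j; have := ltn_ord p; rewrite -{2 4}(divnK r_dvd_n); nia.
have -> : [set i | block i == j] = [set Ordinal (lt_jr p) | p : 'I_r].
  apply/setP => i; rewrite inE; apply/eqP/imsetP => [bij | [p _ ->]].
    by exists (offset i) => //; apply/val_inj; rewrite /= -bij /= -divn_eq.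
  by apply/val_inj; rewrite /= divnMDl // (divn_small (ltn_ord p)) addn0.
by rewrite card_imset ?card_ord // => p p' [] /addnI /val_inj.
Qed.

End Blocks.

Section OffsetBits.
Variables (k h l r : nat) (g : 'I_(k + h) -> 'I_l) (pos : 'I_(k + h) -> 'I_r).
Hypothesis g_pos_inj : forall i i', g i = g i' -> pos i = pos i' -> i = i'.

Definition bits (c : coord k h l) : 'rV['F_2]_r :=
  match c with inl i => delta_mx 0 (pos i) | inr _ => 0 end.

Lemma bits_group_sum_neq0 (I : {set coord k h l}) (e : 'I_l -> coord k h l) :
  I != set0 -> (forall j, e j \in local_group g j) -> (forall j, e j \notin I) ->
  exists j, \sum_(c in I | group_of g c == j) (bits c - bits (e j)) != 0.
Proof.
move=> I0 e_grp e_I.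
have e_neq j c : c \in I -> e j != c by move=> cI; apply: contraNneq (e_I j) => ->.
case: (pickP [pred i | inl i \in I]) => [i0 i0I | no_inl].
  have {}i0I : inl i0 \in I := i0I.
  exists (g i0); pose p := pos i0.
  have bits_p c : group_of g c == g i0 -> c != inl i0 -> bits c 0 p = 0.
    case: c => [i /eqP gi ni|j _] /=; rewrite mxE //=.
    by case: eqP => // pe; case/eqP: ni; rewrite (g_pos_inj gi (esym pe)).
  have bits_e : bits (e (g i0)) 0 p = 0.
    by apply: bits_p; rewrite ?e_neq // -in_local_group.
  apply/negP => /eqP /rowP /(_ p); rewrite summxE mxE (bigD1 (inl i0)) /=; last first.
    by rewrite i0I eqxx.
  rewrite big1 => [|c /andP [/andP [_ gc] nc]]; last by rewrite !mxE bits_p // bits_e subrr.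
  by rewrite !mxE bits_e /p !eqxx subr0 addr0 => /eqP; rewrite oner_eq0.
have [[i | j0] j0I] := set0Pn _ I0; first by have := no_inl i; rewrite /= j0I.
exists j0; rewrite (bigD1 (inr j0)) ?j0I ?eqxx //= big1 ?addr0; last first.
  move=> [i|j] /andP [/andP [cI /eqP gc] nc]; first by have := no_inl i; rewrite /= cI.
  by move: nc; rewrite -gc eqxx.
rewrite sub0r oppr_eq0; have := e_grp j0; have := e_neq j0 _ j0I; rewrite in_local_group.
case: (e j0) => [i _ _ | j /eqP ne /eqP /= ej]; last by case: ne; rewrite ej.
by apply/eqP => /rowP /(_ (pos i)); rewrite !mxE !eqxx => /eqP; rewrite oner_eq0.
Qed.

Lemma bits_design : (l <= 1)%N -> mr_design g bits.
Proof.
move=> l_le1 I e I0 _ e_grp e_I.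
have [j sum_j] := bits_group_sum_neq0 I0 e_grp e_I.
have all_j c : group_of g c = j.
  by apply: ord_inj; have := ltn_ord (group_of g c); have := ltn_ord j; move: l_le1; lia.
apply: contra sum_j => /eqP sum0; apply/eqP; rewrite -[RHS]sum0.
by apply: eq_big => [c|c _]; rewrite all_j ?eqxx ?andbT.
Qed.

End OffsetBits.

Section FrobeniusVandermonde.
Variables (K : fieldType) (r l h : nat) (al : 'I_l -> K).
Hypotheses (charK2 : (2 \in [pchar K])%N) (r_gt0 : (0 < r)%N) (al_inj : injective al).

Lemma vandermonde_vanishing (x : 'I_l -> K) :
  (#|[set j | x j != 0%R]| <= h)%N ->
  (forall n, (n < h)%N -> \sum_j x j * al j ^+ n = 0) -> forall j, x j = 0.
Proof.
move=> supp_h eq_x j0; apply: contraTeq isT => xj0.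
pose P := \prod_(j <- enum ([set j | x j != 0%R] :\ j0)) ('X - (al j)%:P).
have size_P : (size P <= h)%N.
  rewrite size_prod_XsubC -cardE; apply: leq_trans supp_h.
  by rewrite [X in (_ <= X)%N](cardsD1 j0) inE xj0.
have : \sum_j x j * P.[al j] = 0.
  under eq_bigr do rewrite horner_coef mulr_sumr.
  rewrite exchange_big /= big1 // => n _; under eq_bigr do rewrite mulrCA.
  by rewrite -mulr_sumr eq_x ?mulr0 // (leq_trans (ltn_ord n) size_P).
rewrite (bigD1 j0) //= big1 ?addr0 => [/eqP|j neq_j]; last first.
  have [-> | xj] := eqVneq (x j) 0; first by rewrite mul0r.
  rewrite [P.[_]](rootP _) ?mulr0 // /P -(big_map al xpredT (fun a => 'X - a%:P)).
  by rewrite root_prod_XsubC map_f // mem_enum !inE neq_j.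
rewrite mulf_eq0 (negbTE xj0) horner_prod prodf_seq_eq0 /=.
case/hasP => j; rewrite mem_enum !inE => /andP [neq_j _].
by rewrite !hornerE subr_eq0 (inj_eq al_inj) eq_sym (negbTE neq_j).
Qed.

(* For a Frobenius-fixed [x], [S (n * 2 ^ r) = S n ^+ (2 ^ r)] where [S n] is the
   [n]-th power sum: only exponents not divisible by [2 ^ r] matter. *)
Lemma frobenius_power_sums (x : 'I_l -> K) :
  (forall j, x j ^+ (2 ^ r) = x j) -> \sum_j x j = 0 ->
  (forall n, (0 < n < h)%N -> ~~ (2 ^ r %| n)%N -> \sum_j x j * al j ^+ n = 0) ->
  forall n, (n < h)%N -> \sum_j x j * al j ^+ n = 0.
Proof.
move=> x_fixed sum_x eq_x n; elim/ltn_ind: n => n IHn lt_nh.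
have [-> | n_gt0] := posnP n; first by under eq_bigr do rewrite mulr1.
have [dvd_n | ] := boolP (2 ^ r %| n)%N; last by apply: eq_x => //; rewrite n_gt0.
have lt_n : (n %/ 2 ^ r < n)%N.
  by rewrite ltn_Pdiv // -{1}(expn0 2) ltn_exp2l.
rewrite -(divnK dvd_n) (eq_bigr (fun j => (x j * al j ^+ (n %/ 2 ^ r)) ^+ (2 ^ r))).
  by rewrite -(expr2n_sum charK2) IHn ?expr0n ?expn_eq0 // (ltn_trans lt_n).
by move=> j _; rewrite exprMn x_fixed exprM.
Qed.

End FrobeniusVandermonde.

Section MooreDesignVectors.
Variables (k h l r m d : nat) (g : 'I_(k + h) -> 'I_l) (pos : 'I_(k + h) -> 'I_r).
Hypotheses (g_pos_inj : forall i i', g i = g i' -> pos i = pos i' -> i = i') (r_gt0 : (0 < r)%N).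
Variables (K : fieldType) (ell : 'rV['F_2]_r -> K) (al : 'I_l -> K).
Variables (kap : K -> 'rV['F_2]_m) (js : 'I_d -> nat).
Hypotheses (charK2 : (2 \in [pchar K])%N) (al_inj : injective al).
Hypotheses (ell_inj : injective ell) (ellD : {morph ell : a b / a + b}).
Hypothesis ell_fixed : forall a, ell a ^+ (2 ^ r) = ell a.
Hypotheses (kap_inj : injective kap) (kapD : {morph kap : a b / a + b}).
Hypothesis js_cover : forall n, (0 < n < h)%N -> ~~ (2 ^ r %| n)%N -> exists t, js t = n.

Definition design_entry (c : coord k h l) (t : 'I_d) : K :=
  ell (bits pos c) * al (group_of g c) ^+ js t.

Definition design_vec (c : coord k h l) : 'rV['F_2]_(r + d * m) :=
  row_mx (bits pos c) (mxvec (\matrix_(t, p) kap (design_entry c t) 0 p)).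

Lemma design_vec_inr j : design_vec (inr j) = 0.
Proof.
rewrite /design_vec /design_entry /=.
have -> : \matrix_(t < d, p < m) kap (ell 0 * al j ^+ js t) 0 p = 0.
  by apply/matrixP => t p; rewrite !mxE (morph_add0 ellD) mul0r (morph_add0 kapD) mxE.
by rewrite linear0 row_mx0.
Qed.

Section DesignSum.
Variables (I : {set coord k h l}) (e : 'I_l -> coord k h l).
Hypothesis sum0 : \sum_(c in I) (design_vec c - design_vec (e (group_of g c))) = 0.

Lemma design_sum_bits : \sum_(c in I) (bits pos c - bits pos (e (group_of g c))) = 0.
Proof.
have := congr1 lsubmx sum0; rewrite linear0 linear_sum /= => lsum0.
by rewrite -[RHS]lsum0; apply: eq_bigr => c _; rewrite linearB /= /design_vec !row_mxKl.
Qed.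

Lemma design_sum_entries t :
  \sum_(c in I) (design_entry c t - design_entry (e (group_of g c)) t) = 0.
Proof.
apply: (morph_add_inj_eq0 kapD kap_inj); rewrite (morph_add_sum kapD); apply/rowP => p.
have := congr1 (vec_mx \o rsubmx) sum0; rewrite /= !linear0 !linear_sum /=.
move/matrixP => /(_ t p); rewrite summxE !mxE => rsum0; rewrite -[RHS]rsum0 summxE.
apply: eq_bigr => c _; rewrite kapD (morph_addN kapD) !linearB /= /design_vec !row_mxKr.
by rewrite !mxvecK !mxE.
Qed.

End DesignSum.

(* The per-group sums of offset bits, mapped into [K] by [ell], form a
   Frobenius-fixed family whose power sums against [al] all vanish. *)
Lemma design_vec_design : mr_design g design_vec.
Proof.
move=> I e I0 Ih e_grp e_I; apply/negP => /eqP sum0.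
have e_group j : group_of g (e j) = j by apply/eqP; rewrite -in_local_group.
pose u j := \sum_(c in I | group_of g c == j) (bits pos c - bits pos (e j)).
have [j0 /negP []] := bits_group_sum_neq0 g_pos_inj I0 e_grp e_I.
apply/eqP/(morph_add_inj_eq0 ellD ell_inj); rewrite -/(u j0).
apply: (@vandermonde_vanishing _ _ h _ al_inj (fun j => ell (u j))) => [|n lt_nh].
  apply: leq_trans Ih; apply: leq_trans (leq_imset_card (group_of g) I).
  apply/subset_leq_card/subsetP => j; rewrite inE; apply: contraR => /imsetP not_grp.
  rewrite /u big_pred0 ?(morph_add0 ellD) // => c; apply/andP => -[cI /eqP gc].
  by apply: not_grp; exists c.
apply: (frobenius_power_sums charK2 r_gt0) lt_nh => [j||].
- exact: ell_fixed.
- rewrite -(morph_add_sum ellD) /u.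
  rewrite -(sum_by_group g I (fun c j => bits pos c - bits pos (e j))).
  by rewrite design_sum_bits ?(morph_add0 ellD).
- move=> n' /js_cover cover_n' /cover_n' [t <-]; rewrite -[RHS](design_sum_entries sum0 t).
  rewrite (sum_by_group g I (fun c j => design_entry c t - design_entry (e j) t)).
  apply: eq_bigr => j _; rewrite /u (morph_add_sum ellD) mulr_suml.
  apply: eq_bigr => c /andP [_ /eqP gc].
  by rewrite ellD (morph_addN ellD) mulrBl /design_entry e_group gc.
Qed.

End MooreDesignVectors.

Lemma count_not_dvdn q n : (0 < q)%N ->
  count (fun j => ~~ (q %| j)%N) (iota 1 n) = (n - n %/ q)%N.
Proof.
move=> q_gt0; elim: n => [|n IHn]; first by rewrite div0n.
rewrite -[n.+1]addn1 iotaD count_cat IHn /= add1n addn1 divnS // addn0.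
by have := leq_div n q; case: (q %| n.+1)%N => /=; lia.
Qed.

Lemma enum_not_dvdn q n : (0 < q)%N ->
  exists js : 'I_(ceil_div (n * (q - 1)) q) -> nat,
    forall j, (0 < j <= n)%N -> ~~ (q %| j)%N -> exists t, js t = j.
Proof.
move=> q_gt0; pose s := [seq j <- iota 1 n | ~~ (q %| j)%N].
have size_s : (size s <= ceil_div (n * (q - 1)) q)%N.
  rewrite size_filter count_not_dvdn // /ceil_div leq_divRL //.
  have := divn_eq n q; have := ltn_pmod n q_gt0; nia.
exists (fun t => nth 0%N s t) => j /andP [j_gt0 le_jn] not_dvd.
have js : j \in s by rewrite mem_filter not_dvd mem_iota j_gt0 add1n ltnS.
have lt_j : (index j s < ceil_div (n * (q - 1)) q)%N by rewrite (leq_trans _ size_s) ?index_mem.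
by exists (Ordinal lt_j); rewrite /= nth_index.
Qed.

Lemma free_comb_inj (R : fieldType) (vT : vectType R) n r (X : n.-tuple vT) :
  free X -> (r <= n)%N -> injective (fun b : 'rV[R]_r => \sum_(p < r) b 0 p *: X`_p).
Proof.
move=> /freeP free_X le_rn b1 b2 /= eq_comb; apply/eqP; rewrite -subr_eq0; apply/eqP/rowP => p.
pose c (i : 'I_n) := oapp (fun q : 'I_r => (b1 - b2) 0 q) 0 (insub (val i)).
have c_widen q : c (widen_ord le_rn q) = (b1 - b2) 0 q by rewrite /c /= valK.
rewrite [RHS]mxE -c_widen; apply: free_X.
rewrite (bigID (fun i : 'I_n => i < r)%N) /= [X in _ + X]big1 ?addr0; last first.
  by move=> i /negbTE lt_ir; rewrite /c insubF // scale0r.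
rewrite (big_ord_narrow le_rn) /=.
rewrite -[RHS](subrr (\sum_(q < r) b2 0 q *: X`_q)) -{1}eq_comb -sumrB.
by apply: eq_bigr => q _; rewrite c_widen !mxE scalerBl.
Qed.

Section FiniteFieldOfChar2.
Variables (K : finFieldType) (m : nat).
Hypothesis card_K : #|K| = (2 ^ m)%N.

Lemma card_pchar2 : (2 \in [pchar K])%N.
Proof. exact: card_finPcharP card_K _. Qed.

Let KF2 := pPrimeCharType card_pchar2.

Lemma dim_pPrimeChar2 : dim KF2 = m.
Proof. by rewrite -dimvf pprimeChar_dimf [#|_|]card_K pfactorK. Qed.

Import VectorInternalTheory.

Lemma F2_vector_embedding :
  exists f : 'rV['F_2]_m -> K, injective f /\ {morph f : a b / a + b}.
Proof.
rewrite -dim_pPrimeChar2; exists (fun u => r2v u : KF2); split; first exact: r2v_inj.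
by move=> a b /=; rewrite raddfD.
Qed.

Lemma F2_coordinates :
  exists f : K -> 'rV['F_2]_m, injective f /\ {morph f : a b / a + b}.
Proof.
rewrite -dim_pPrimeChar2; exists (fun x : K => v2r (x : KF2)); split; first exact: v2r_inj.
by move=> a b /=; rewrite raddfD.
Qed.

(* The multiplicative group is cyclic of order [2^m - 1], a multiple of
   [2^r - 1]: its subgroup of that order, with 0, is fixed by [x |-> x^(2^r)]. *)
Lemma card_frobenius_fixed r : (r %| m)%N ->
  (2 ^ r <= #|[pred x : K | x ^+ (2 ^ r) == x]|)%N.
Proof.
move=> r_dvd_m; pose N := (2 ^ m).-1; pose M := (2 ^ r).-1.
have N_gt0 : (0 < N)%N.
  by rewrite /N -card_K -subn1 subn_gt0 finNzRing_gt1.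
have M_dvd_N : (M %| N)%N by rewrite /N -(divnK r_dvd_m) mulnC expnM dvdn_pred_predX.
have M_gt0 : (0 < M)%N by apply: dvdn_gt0 M_dvd_N.
pose units := enum (predC1 (0 : K)).
have units_roots : all N.-unity_root units.
  apply/allP => x; rewrite mem_enum inE => x0.
  rewrite unity_rootE; apply/eqP; apply: (mulIf x0); rewrite mul1r -exprSr.
  by rewrite /N prednK ?expn_gt0 // -card_K expf_card.
have size_units : size units = N by rewrite -cardE cardC1 card_K.
have := has_prim_root N_gt0 units_roots (enum_uniq _); rewrite size_units leqnn.
case/(_ isT)/hasP => z _ z_prim; have w_prim := dvdn_prim_root z_prim M_dvd_N.
set w := z ^+ (N %/ M) in w_prim.
pose fixed := 0 :: [seq w ^+ i | i <- iota 0 M].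
have uniq_fixed : uniq fixed.
  rewrite /= map_inj_in_uniq ?iota_uniq => [|i j]; last first.
    rewrite !mem_iota !add0n => lt_iM lt_jM /eqP.
    by rewrite (eq_prim_root_expr w_prim) !modn_small // => /eqP.
  rewrite andbT; apply/mapP => -[i _ /esym /eqP].
  by rewrite expf_eq0 (prim_root_eq0 w_prim) (gtn_eqF M_gt0) andbF.
have size_fixed : size fixed = (2 ^ r)%N by rewrite /= size_map size_iota prednK ?expn_gt0.
rewrite -{1}size_fixed -(card_uniqP uniq_fixed); apply/subset_leq_card/subsetP => x.
rewrite !inE => /orP [/eqP -> | /mapP [i _ ->]]; first by rewrite expr0n expn_eq0.
rewrite -exprM mulnC exprM -[(2 ^ r)%N](prednK (expn_gt0 2 r)) exprS.
by rewrite (prim_expr_order w_prim) mulr1.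
Qed.

Lemma frobenius_fixed_F2_embedding r : (r %| m)%N ->
  exists ell : 'rV['F_2]_r -> K,
    [/\ injective ell, {morph ell : a b / a + b} & forall a, ell a ^+ (2 ^ r) = ell a].
Proof.
move=> r_dvd_m; pose fixed := enum [pred x : K | x ^+ (2 ^ r) == x].
pose V : {vspace KF2} := <<in_tuple (fixed : seq KF2)>>%VS.
have scale_fixed (c : 'F_2) (x : KF2) :
    (x : K) ^+ (2 ^ r) = x -> ((c *: x : KF2) : K) ^+ (2 ^ r) = c *: x.
  move=> fixed_x; rewrite -[_ *: _]/((c : nat)%:R * (x : K)) exprMn fixed_x.
  by case: c => -[|[|]] //= _; rewrite ?expr0n ?expn_eq0 ?expr1n.
have fixed_V (v : KF2) : v \in V -> (v : K) ^+ (2 ^ r) = v.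
  move/coord_span ->; rewrite (expr2n_sum card_pchar2); apply: eq_bigr => i _.
  by apply: scale_fixed; apply/eqP; have := mem_nth 0 (ltn_ord i); rewrite mem_enum.
have dim_V : (r <= \dim V)%N.
  rewrite -(@leq_exp2l 2) // (leq_trans (card_frobenius_fixed r_dvd_m)) //.
  rewrite -[X in (_ <= X ^ _)%N](card_Fp (isT : prime 2)) -card_vspace.
  by apply/subset_leq_card/subsetP => x fixed_x; apply: memv_span; rewrite mem_enum.
pose X := vbasis V.
exists (fun b => (\sum_(p < r) b 0 p *: X`_p : KF2) : K); split.
- exact: free_comb_inj (basis_free (vbasisP V)) dim_V.
- by move=> a b; rewrite /= -big_split; apply: eq_bigr => p _; rewrite mxE scalerDl.
move=> b; apply: fixed_V; apply: memv_suml => p _; apply: memvZ.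
by apply: vbasis_mem; apply: mem_nth; rewrite size_tuple (leq_trans (ltn_ord p)).
Qed.

End FiniteFieldOfChar2.

Lemma design_in_field (F : finFieldType) n k h l (g : 'I_(k + h) -> 'I_l)
    (v : coord k h l -> 'rV['F_2]_n) :
  #|F| = (2 ^ n)%N -> (forall j, v (inr j) = 0) -> mr_design g v ->
  exists2 b : coord k h l -> F, (forall j, b (inr j) = 0) & mr_design g b.
Proof.
move=> card_F v_inr design_v; have [f [f_inj fD]] := F2_vector_embedding card_F.
exists (f \o v); last exact: mr_design_morph.
by move=> j; rewrite /= v_inr (morph_add0 fD).
Qed.

Lemma exists_moore_design k h l r m (g : 'I_(k + h) -> 'I_l) (pos : 'I_(k + h) -> 'I_r) :
  (forall i i', g i = g i' -> pos i = pos i' -> i = i') ->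
  (0 < r)%N -> (0 < m)%N -> (r %| m)%N -> (l <= 2 ^ m)%N ->
  exists2 v : coord k h l -> 'rV['F_2]_(r + ceil_div ((h - 1) * (2 ^ r - 1)) (2 ^ r) * m),
    (forall j, v (inr j) = 0) & mr_design g v.
Proof.
move=> g_pos_inj r_gt0 m_gt0 r_dvd_m l_le.
have [K _ card_K] := pPrimePowerField (isT : prime 2) m_gt0.
have [ell [ell_inj ellD ell_fixed]] := frobenius_fixed_F2_embedding card_K r_dvd_m.
have [kap [kap_inj kapD]] := F2_coordinates card_K.
have [js js_cover] := enum_not_dvdn (h - 1) (expn_gt0 2 r).
have l_le_K : (l <= #|K|)%N by rewrite card_K.
pose al (j : 'I_l) : K := enum_val (widen_ord l_le_K j).
have al_inj : injective al by move=> j j' /enum_val_inj [] /val_inj.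
exists (design_vec g pos ell al kap js); first exact: design_vec_inr.
apply: design_vec_design => // [|n /andP [n_gt0 lt_nh]]; first exact: card_pchar2 card_K.
by apply: js_cover; rewrite n_gt0 /=; lia.
Qed.

Theorem theorem15 (k r h m : nat) :
  (0 < k)%N -> (0 < r)%N -> (0 < h)%N -> (r %| k + h)%N ->
  (* m is the smallest (nonnegative) integer with r | m and l <= 2^m *)
  (r %| m)%N -> ((k + h) %/ r <= 2 ^ m)%N ->
  (forall m' : nat, (r %| m')%N -> ((k + h) %/ r <= 2 ^ m')%N -> (m <= m')%N) ->
  forall F : finFieldType,
    #|F| = (2 ^ (r + m * ceil_div ((h - 1) * (2 ^ r - 1)) (2 ^ r)))%N ->
    exists (A : 'M[F]_(k, h)) (g : 'I_(k + h) -> 'I_((k + h) %/ r)),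
      groups_of_size r g /\ max_recoverable A g.
Proof.
move=> _ r_gt0 _ r_dvd_kh r_dvd_m l_le _ F card_F.
have charF2 := card_pchar2 card_F.
pose g := block r_gt0 r_dvd_kh.
have g_pos_inj : forall i i', g i = g i' -> offset r_gt0 i = offset r_gt0 i' -> i = i'.
  exact: block_offset_inj.
have [b b_inr design_b] : exists2 b : coord k h ((k + h) %/ r) -> F,
    (forall j, b (inr j) = 0) & mr_design g b; last first.
  exists (moore_heavy b), g; split; first exact: card_block.
  exact: moore_max_recoverable charF2 b_inr design_b.
have [m0 | m_gt0] := posnP m.
  (* a single local group: the position bits alone suffice *)
  apply: (design_in_field (v := bits (offset r_gt0)) _ (fun j => erefl)).
    by rewrite card_F m0 mul0n addn0.
  by apply: (bits_design g_pos_inj); move: l_le; rewrite m0.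
have [v v_inr design_v] := exists_moore_design g_pos_inj r_gt0 m_gt0 r_dvd_m l_le.
by apply: design_in_field v_inr design_v; rewrite card_F mulnC.
Qed.
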